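(* For every $n\in\mathbb{N}_{\geq1}$, the GFB tree $T_n^{gfb}$ with $n$ leaves has minimal Colless index, i.e. $\mathcal{C}(T_n^{gfb})=c_n$, where $c_n$ is the minimum of $\mathcal{C}(T)$ over all rooted binary trees $T$ with $n$ leaves.
   Context: A rooted binary tree with $n\geq 2$ leaves is a rooted tree whose root has degree 2 and all other internal nodes have degree 3; for $n=1$ it is a single node. Trees are considered up to isomorphism. For an internal node $v$ with children $v_1,v_2$, let $\kappa(v_i)$ be the number of leaves descending from $v_i$ ($1$ if $v_i$ is a leaf). The Colless index is $\mathcal{C}(T)=\sum_v|\kappa(v_1)-\kappa(v_2)|$ over internal nodes $v$. The size of a tree is its number of leaves. The greedy from the bottom (GFB) tree $T_n^{gfb}$ is the output of the following procedure: start with a multiset of $n$ single-node trees; while the multiset contains more than one tree, remove a tree $u$ of minimal size, then remove a tree $v$ of minimal size among the remaining ones, and insert the tree consisting of a new root whose two children are the roots of $u$ and $v$; output the single remaining tree. (The output is unique up to isomorphism.) *)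

From mathcomp Require Import all_boot.
From Stdlib Require Import Permutation Relations.Relation_Operators.

Set Implicit Arguments.
Unset Strict Implicit.
Unset Printing Implicit Defensive.

(* Rooted binary trees (unlabelled; isomorphism classes are handled by the fact
   that every notion below is invariant under swapping children). *)
Inductive btree : Type :=
| Leaf : btree
| Node : btree -> btree -> btree.

Fixpoint leaves (t : btree) : nat :=
  match t with
  | Leaf => 1
  | Node l r => leaves l + leaves r
  end.

Definition natdist (a b : nat) : nat := (a - b) + (b - a).

Fixpoint colless (t : btree) : nat :=
  match t with
  | Leaf => 0
  | Node l r => natdist (leaves l) (leaves r) + colless l + colless r
  end.

(* One step of the greedy-from-the-bottom procedure on a multiset of trees
   (represented as a list up to permutation): remove a tree u of minimal size,
   then a tree v of minimal size among the remaining ones, and insert the tree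
   with a new root whose children are u and v. Any tie-breaking is allowed. *)
Definition gfb_step (s s' : seq btree) : Prop :=
  exists u v rest,
    Permutation s (u :: v :: rest) /\
    all (fun t => leaves u <= leaves t) (v :: rest) /\
    all (fun t => leaves v <= leaves t) rest /\
    s' = Node u v :: rest.

Definition is_gfb_tree (n : nat) (T : btree) : Prop :=
  clos_refl_trans (seq btree) gfb_step (nseq n Leaf) [:: T].

Definition has_min_colless (n : nat) (T : btree) : Prop :=
  leaves T = n /\ forall T' : btree, leaves T' = n -> colless T <= colless T'.

From mathcomp Require Import all_boot zify.
From Stdlib Require Import Permutation Relations.Relation_Operators.

(* Let mincol n = mincol (uphalf n) + mincol n./2 + odd n for n > 1.  A parity induction gives
   mincol (a + b) <= mincol a + mincol b + |a - b|, so mincol n bounds from below the Colless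
   index of every tree with n leaves.  Conversely, the GFB forest always consists of trees with
   Colless index at most mincol of their size, and for some k all its sizes lie in
   [2^k, 2^(k+1)], at most one of them strictly inside.  The two trees merged by a GFB step
   therefore have sizes in that interval, one of them at an endpoint, and for such sizes the
   inequality above is an equality.  Hence the final tree has Colless index mincol n. *)
Lemma Permutation_map_perm_eq {T : Type} {U : eqType} (f : T -> U) {s t : seq T} :
  Permutation s t -> perm_eq (map f s) (map f t).
Proof.
elim=> [|x s1 t1 _|x y s1|s1 t1 u1 _ eq_st _ eq_tu] //=.
- by rewrite perm_cons.
- by rewrite -[f y :: _]/([:: f y] ++ [:: f x] ++ _) perm_catCA.
- by rewrite (permPl eq_st).
Qed.

Lemma Permutation_all {T : Type} (a : pred T) {s t : seq T} :
  Permutation s t -> all a s = all a t.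
Proof. by elim=> //= [x s1 t1 _ -> | x y s1 | s1 t1 u1 _ -> _ ->] //; rewrite andbCA. Qed.

Lemma Permutation_size {T : Type} {s t : seq T} : Permutation s t -> size s = size t.
Proof. by elim=> //= [x s1 t1 _ -> | s1 t1 u1 _ -> _ ->]. Qed.

Lemma clos_refl_trans_invariant {A : Type} {R : A -> A -> Prop} {P : A -> Prop} {x y : A} :
  (forall a b, R a b -> P a -> P b) -> clos_refl_trans A R x y -> P x -> P y.
Proof. by move=> stepP; elim=> [a b /stepP | | a b c _ Pab _ Pbc] // /Pab. Qed.

Fixpoint mincol_fuel (fuel n : nat) : nat :=
  if fuel is k.+1 then
    if n <= 1 then 0 else mincol_fuel k (uphalf n) + mincol_fuel k n./2 + odd n
  else 0.

Definition mincol (n : nat) : nat := mincol_fuel n n.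

Lemma mincol_fuel_enough k1 k2 n :
  n <= k1 -> n <= k2 -> mincol_fuel k1 n = mincol_fuel k2 n.
Proof.
elim: k1 k2 n => [|k1 IH] [|k2] n //=; try by move=> *; have -> : n = 0 by lia.
by case: ifP => // n_gt1 *; rewrite !(IH k2); lia.
Qed.

Lemma mincolE n : 1 < n -> mincol n = mincol (uphalf n) + mincol n./2 + odd n.
Proof.
move=> n_gt1; rewrite {1}/mincol; case: n n_gt1 => [|n] //= n_gt1.
have fuelE m : m <= n -> mincol_fuel n m = mincol m by move=> ?; apply: mincol_fuel_enough.
rewrite ifN; last lia.
by rewrite !fuelE //; lia.
Qed.

Lemma mincol_double m : mincol m.*2 = (mincol m).*2.
Proof.
by case: m => [|m] //; rewrite mincolE ?uphalf_double ?doubleK ?odd_double ?addn0 ?addnn.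
Qed.

Lemma mincol_odd m : 0 < m -> mincol m.*2.+1 = mincol m.+1 + mincol m + 1.
Proof.
move=> m_gt0; rewrite mincolE; last lia.
by rewrite /= odd_double uphalf_double doubleK.
Qed.

Lemma mincol_pow2 k : mincol (2 ^ k) = 0.
Proof. by elim: k => // k IH; rewrite expnS mul2n mincol_double IH. Qed.

Lemma double_cases m : exists m1, m = m1.*2 \/ m = m1.*2.+1.
Proof. by exists m./2; lia. Qed.

Lemma leq_mincolS n : mincol n.+1 <= mincol n + n.-1.
Proof.
have [N] := ubnP n; elim: N n => // N IH n.
case: (double_cases n) => c [] -> /ltnSE le_nN; case: (posnP c) => [-> // | c_gt0].
- have := IH c; rewrite mincol_odd // mincol_double; lia.
- have := IH c; rewrite -doubleS mincol_double mincol_odd //; lia.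
Qed.

Lemma leq_mincolD a b : mincol (a + b) <= mincol a + mincol b + natdist a b.
Proof.
rewrite /natdist; have [n] := ubnP (a + b); elim: n a b => // n IH a b /ltnSE le_ab_n.
wlog le_ab : a b le_ab_n / a <= b.
  move=> hw; case: (leqP a b) => [|/ltnW le_ba]; first exact: hw.
  by rewrite addnC; have := hw b a; lia.
have [mincol0 mincol1] : mincol 0 = 0 /\ mincol 1 = 0 by [].
case: (ltnP a 2) => [a_lt2 | a_ge2].
  have [->|->] : a = 0 \/ a = 1 by lia.
    by rewrite add0n; lia.
  by rewrite add1n; have := leq_mincolS b; lia.
have [a1 [Ea | Ea]] := double_cases a; have [b1 [Eb | Eb]] := double_cases b; subst a b.
- rewrite -doubleD !mincol_double; have := IH a1 b1; lia.
- rewrite addnS -doubleD !mincol_odd ?mincol_double; try lia.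
  have := IH a1 b1; have := IH a1 b1.+1; rewrite addnS; lia.
- rewrite addSn -doubleD !mincol_odd ?mincol_double; try lia.
  have := IH a1 b1; have := IH a1.+1 b1; rewrite addSn; lia.
- rewrite addSn addnS -doubleD -doubleS mincol_double !mincol_odd; try lia.
  have := IH a1 b1.+1; have := IH a1.+1 b1; rewrite addSn addnS; lia.
Qed.

Lemma mincol_le_colless t : mincol (leaves t) <= colless t.
Proof. by elim: t => //= l IHl r IHr; have := leq_mincolD (leaves l) (leaves r); lia. Qed.

Lemma mincolD_pow2 k m :
  2 ^ k <= m.*2 <= 4 * 2 ^ k -> mincol (m + 2 ^ k) = mincol m + natdist m (2 ^ k).
Proof.
rewrite /natdist; elim: k m => [|k IH] m.
  by move=> hm; have [->|->] // : m = 1 \/ m = 2 by lia.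
rewrite expnS mul2n.
(* rules out 2 ^ k = m1.*2.+1 when applying IH to m1 *)
have pow2_odd : odd (2 ^ k) -> 2 ^ k = 1 by rewrite oddX orbF => /eqP ->.
have [m1 [-> | ->]] := double_cases m => hm.
  by rewrite -doubleD !mincol_double IH; lia.
have [m1_0 | m1_gt0] := posnP m1.
  by rewrite m1_0 (_ : 2 ^ k = 1) //; lia.
rewrite addSn -doubleD !mincol_odd; try lia.
have := IH m1; have := IH m1.+1; rewrite addSn; lia.
Qed.

Lemma mincolD_dyadic {k a b} :
  2 ^ k <= a <= (2 ^ k).*2 -> 2 ^ k <= b <= (2 ^ k).*2 -> a = 2 ^ k \/ b = (2 ^ k).*2 ->
  mincol (a + b) = mincol a + mincol b + natdist a b.
Proof.
have pow2S : 2 ^ k.+1 = (2 ^ k).*2 by rewrite expnS mul2n.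
move=> ha hb [-> | ->].
  by rewrite mincol_pow2 addnC mincolD_pow2 /natdist; lia.
by rewrite -pow2S mincol_pow2 mincolD_pow2 /natdist; lia.
Qed.

Definition balanced (p : nat) (ns : seq nat) : bool :=
  all (fun k => p <= k <= p.*2) ns && (count (fun k => p < k < p.*2) ns <= 1).

Lemma perm_balanced {p ns ms} : perm_eq ns ms -> balanced p ns = balanced p ms.
Proof. by move=> eq_ns; rewrite /balanced (perm_all _ eq_ns) (permP eq_ns). Qed.

Lemma balanced_min2 {p a b ns} :
  balanced p [:: a, b & ns] -> a <= b -> all (leq b) ns ->
  (a = p \/ b = p.*2) /\ (b = p \/ all (pred1 p.*2) ns).
Proof.
rewrite /balanced /= => /andP[/and3P[/andP[pa ap] /andP[pb bp] ns_range] count_le1] le_ab ns_geb.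
split; first lia.
have [-> | b_neq_p] := eqVneq b p; [by left | right].
apply/allP => x x_ns; have /andP[px xp] := allP ns_range x x_ns.
have le_bx := allP ns_geb x x_ns.
rewrite /= eqn_leq xp /=; apply: contraT; rewrite -ltnNge => x_lt.
have : 0 < count (fun k => p < k < p.*2) ns.
  by rewrite -has_count; apply/hasP; exists x => //; lia.
lia.
Qed.

Lemma balanced_merge {p a b ns} :
  balanced p [:: a, b & ns] -> a <= b -> all (leq b) ns ->
  balanced p [:: a + b & ns] \/ balanced p.*2 [:: a + b & ns].
Proof.
move=> bal le_ab ns_geb.
have [_ [b_p | /all_pred1P ns_2p]] := balanced_min2 bal le_ab ns_geb.
  left; move: bal; rewrite /balanced /= b_p => /andP[/and3P[/andP[pa ap] _ ->]].
  by lia.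
right; move: bal; rewrite /balanced /= => /andP[/and3P[/andP[pa ap] /andP[pb bp] _] _].
by rewrite ns_2p all_nseq count_nseq; lia.
Qed.

Definition colless_optimal (t : btree) : bool := colless t <= mincol (leaves t).

Definition gfb_invariant (n : nat) (s : seq btree) : Prop :=
  [/\ sumn (map leaves s) = n, exists k, balanced (2 ^ k) (map leaves s)
    & all colless_optimal s].

Lemma gfb_invariant_nseq n : gfb_invariant n (nseq n Leaf).
Proof.
split; last by rewrite all_nseq orbT.
  by rewrite map_nseq sumn_nseq mul1n.
by exists 0; rewrite map_nseq /balanced all_nseq count_nseq /= orbT mul0n.
Qed.

Lemma gfb_invariant_perm {n s t} : Permutation s t -> gfb_invariant n s -> gfb_invariant n t.
Proof.
move=> st; have eq_st := Permutation_map_perm_eq leaves st.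
case=> [<- [k bal] opt]; split; first exact/esym/perm_sumn.
  by exists k; rewrite -(perm_balanced eq_st).
by rewrite -(Permutation_all colless_optimal st).
Qed.

Lemma gfb_invariant_step n s s' : gfb_step s s' -> gfb_invariant n s -> gfb_invariant n s'.
Proof.
case=> [u [v [rest [st [/andP[le_uv _] [v_min ->]]]]]] /(gfb_invariant_perm st).
case=> [sum_s [k bal] /= /and3P[opt_u opt_v opt_rest]].
rewrite -(all_map leaves (leq (leaves v))) in v_min.
split=> /=; first by rewrite -sum_s /= addnA.
  have [] := balanced_merge bal le_uv v_min; first by exists k.
  by rewrite -mul2n -expnS; exists k.+1.
have [extreme _] := balanced_min2 bal le_uv v_min.
move: bal opt_u opt_v => /andP[/and3P[ha hb _] _]; rewrite opt_rest andbT /colless_optimal /=.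
by rewrite (mincolD_dyadic ha hb extreme); lia.
Qed.

Lemma exists_min_Permutation {T : Type} (key : T -> nat) (x : T) (s : seq T) :
  exists y s', Permutation (x :: s) (y :: s') /\ all (fun z => key y <= key z) s'.
Proof.
elim: s x => [|x' s IH] x; first by exists x, [::].
have [y [s' [st y_min]]] := IH x'.
case: (leqP (key x) (key y)) => [le_xy | lt_yx].
  exists x, (x' :: s); split=> //; rewrite (Permutation_all _ st) /= le_xy.
  by apply: sub_all y_min => z; apply: leq_trans.
exists y, (x :: s'); split; last by rewrite /= ltnW.
exact: perm_trans (perm_skip x st) (perm_swap y x s').
Qed.

Lemma gfb_run (t : btree) (s : seq btree) :
  exists T, clos_refl_trans _ gfb_step (t :: s) [:: T].
Proof.
have [n] := ubnP (size s); elim: n t s => // n IH t [|x s] /= size_lt.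
  by exists t; apply: rt_refl.
have [u [[|y r] [st_u u_min]]] := exists_min_Permutation leaves t (x :: s).
  by have := Permutation_size st_u.
have [v [rest [st_v v_min]]] := exists_min_Permutation leaves y r.
have step : gfb_step (t :: x :: s) (Node u v :: rest).
  exists u, v, rest; split; first exact: perm_trans st_u (perm_skip u st_v).
  by rewrite -(Permutation_all _ st_v).
have [|T run] := IH (Node u v) rest.
  by move: (Permutation_size st_u) (Permutation_size st_v) => /= [<-] [<-].
by exists T; apply: rt_trans (rt_step _ _ _ _ step) run.
Qed.

Theorem theorem5 (n : nat) (hn : 1 <= n) :
  (exists T : btree, is_gfb_tree n T) /\
  (forall T : btree, is_gfb_tree n T -> has_min_colless n T).
Proof.
split; first by case: n hn => // n _; apply: gfb_run.
move=> T gfbT.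
have [sumT _ optT] := clos_refl_trans_invariant (@gfb_invariant_step n) gfbT (gfb_invariant_nseq n).
have leavesT : leaves T = n by rewrite -sumT /= addn0.
split=> // T' leavesT'.
move: optT; rewrite /= andbT /colless_optimal leavesT -leavesT' => /leq_trans; apply.
exact: mincol_le_colless.
Qed.
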